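(* Let $r$ be a positive integer with binary bit length $\ell(r)$, and let $A$ and $B$ be real symmetric positive semidefinite matrices with $\|A\|,\|B\|\leq1$ such that $I-A\approx_{\epsilon}I-B$ and $I-B\approx_{\epsilon}I-A$, where $0\le\epsilon\leq1/(2\ell(r))$. Then $I-A^r\approx_{2\epsilon\ell(r)}I-B^r$.
   Context: $\|\cdot\|$ is the spectral norm. For real symmetric $X,Y$ and $\epsilon\ge0$, $X\approx_\epsilon Y$ means $(1-\epsilon)v^TYv\le v^TXv\le(1+\epsilon)v^TYv$ for all vectors $v$. *)

(* real symmetric matrices over an arbitrary real closed field
   (elementarily equivalent to the reals). *)
From HB Require Import structures.
From mathcomp Require Import all_boot all_order all_algebra.
Set Implicit Arguments. Unset Strict Implicit. Unset Printing Implicit Defensive.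
Import Order.TTheory GRing.Theory Num.Theory.
Local Open Scope ring_scope.

Definition qform (R : rcfType) (n : nat) (X : 'M[R]_n) (v : 'cV[R]_n) : R :=
  (v^T *m X *m v) 0 0.

Definition mx_approx (R : rcfType) (n : nat) (X Y : 'M[R]_n) (eps : R) : Prop :=
  forall v : 'cV[R]_n,
    (1 - eps) * qform Y v <= qform X v /\ qform X v <= (1 + eps) * qform Y v.

Definition symmetric_mx (R : rcfType) (n : nat) (A : 'M[R]_n) : Prop := A^T = A.

Definition psd_mx (R : rcfType) (n : nat) (A : 'M[R]_n) : Prop :=
  symmetric_mx A /\ forall v : 'cV[R]_n, 0 <= qform A v.

(* ||A|| <= 1 for the spectral (l2 operator) norm: ||A v||_2 <= ||v||_2 for all v,
   written with squared Euclidean norms. *)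
Definition spec_norm_le1 (R : rcfType) (n : nat) (A : 'M[R]_n) : Prop :=
  forall v : 'cV[R]_n, ((A *m v)^T *m (A *m v)) 0 0 <= (v^T *m v) 0 0.

(* matrix power for arbitrary size n (including n = 0) *)
Definition mx_pow (R : rcfType) (n : nat) (A : 'M[R]_n) (k : nat) : 'M[R]_n :=
  iter k (mulmx A) 1%:M.

Definition bitlen (r : nat) : nat := (trunc_log 2 r).+1.

(* Writing E := A - B, the difference A^r - B^r telescopes as
   sum_j A^(r-1-j) E B^j, and the two-sided approximation bounds each term
   |x^T A^(r-1-j) E B^j x| by eps/2 (|A^(r-1-j) x|_Q^2 + |B^j x|_Q^2) with
   Q = I - B.  For a symmetric psd M the differences x^T M^k x - x^T M^(k+1) x
   are nonincreasing in k, so sum_(j<r) x^T M^j (I - M) M^j x <= x^T (I - M^r) x.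
   Hence |x^T (I - A^r) x - x^T (I - B^r) x| <= eps/2 ((1 + eps) x^T (I - A^r) x
   + x^T (I - B^r) x), which for eps <= 1/2 gives the approximation factor 2 eps
   for every r; the factor 2 eps l(r) of the statement is weaker.  Only B needs
   to be a contraction, to make I - B^r positive semidefinite. *)

From HB Require Import structures.
From mathcomp Require Import all_boot all_order all_algebra.
From mathcomp Require Import ring lra.
Import Order.TTheory GRing.Theory Num.Theory.
Local Open Scope ring_scope.
Set Implicit Arguments. Unset Strict Implicit.

Section BilinearForm.
Variables (R : comPzRingType) (n : nat).
Implicit Types (X Y M : 'M[R]_n) (u v w : 'cV[R]_n).

Definition bform X u v : R := (u^T *m X *m v) 0 0.

Lemma bformDm X Y u v : bform (X + Y) u v = bform X u v + bform Y u v.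
Proof. by rewrite /bform mulmxDr mulmxDl mxE. Qed.

Lemma bformBm X Y u v : bform (X - Y) u v = bform X u v - bform Y u v.
Proof. by rewrite /bform mulmxBr mulmxBl !mxE. Qed.

Lemma bform0m u v : bform 0 u v = 0.
Proof. by rewrite /bform mulmx0 mul0mx mxE. Qed.

Lemma bformDl X u w v : bform X (u + w) v = bform X u v + bform X w v.
Proof. by rewrite /bform linearD /= !mulmxDl mxE. Qed.

Lemma bformNl X u v : bform X (- u) v = - bform X u v.
Proof. by rewrite /bform linearN /= !mulNmx mxE. Qed.

Lemma bformDr X u w v : bform X v (u + w) = bform X v u + bform X v w.
Proof. by rewrite /bform !mulmxDr mxE. Qed.

Lemma bformNr X u v : bform X v (- u) = - bform X v u.
Proof. by rewrite /bform !mulmxN mxE. Qed.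

Lemma bformC X u v : X^T = X -> bform X u v = bform X v u.
Proof.
move=> symX; rewrite /bform -[in LHS](trmxK (u^T *m X *m v)) mxE.
by rewrite !trmx_mul trmxK symX mulmxA.
Qed.

Lemma bform_mulmxr X M u v : bform X u (M *m v) = bform (X *m M) u v.
Proof. by rewrite /bform !mulmxA. Qed.

Lemma bform_mulmxl X M u v : bform X (M *m u) v = bform (M^T *m X) u v.
Proof. by rewrite /bform trmx_mul !mulmxA. Qed.

End BilinearForm.

Section MatrixPower.
Variables (R : rcfType) (n : nat).
Implicit Types (M : 'M[R]_n).

Lemma mx_powS M k : mx_pow M k.+1 = M *m mx_pow M k.
Proof. by []. Qed.

Lemma mx_powSr M k : mx_pow M k.+1 = mx_pow M k *m M.
Proof.
elim: k => [|k IH]; first by rewrite mx_powS mulmx1 mul1mx.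
by rewrite [LHS]mx_powS IH mulmxA -mx_powS -IH.
Qed.

Lemma mx_powD M i j : mx_pow M (i + j) = mx_pow M i *m mx_pow M j.
Proof.
elim: i => [|i IH]; first by rewrite add0n mul1mx.
by rewrite addSn !mx_powS IH mulmxA.
Qed.

Lemma tr_mx_pow M k : M^T = M -> (mx_pow M k)^T = mx_pow M k.
Proof.
move=> symM; elim: k => [|k IH]; first exact: trmx1.
by rewrite mx_powS trmx_mul IH symM -mx_powSr.
Qed.

End MatrixPower.

Section QuadraticForm.
Variables (R : rcfType) (n : nat).
Implicit Types (X Y M : 'M[R]_n) (u v w x : 'cV[R]_n).

Lemma qformE X v : qform X v = bform X v v.
Proof. by []. Qed.

Lemma qform1_ge0 v : 0 <= qform 1%:M v.
Proof.
rewrite /qform mulmx1 mxE; apply: sumr_ge0 => i _.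
by rewrite mxE -expr2 sqr_ge0.
Qed.

Lemma qform_mx_powSS M k v : M^T = M ->
  qform (mx_pow M k.+2) v = qform (mx_pow M k) (M *m v).
Proof.
by move=> symM; rewrite !qformE bform_mulmxl bform_mulmxr symM -mx_powS -mx_powSr.
Qed.

Lemma qform_mx_pow_ge0 M k v : psd_mx M -> 0 <= qform (mx_pow M k) v.
Proof.
case=> symM psdM.
suff : (forall v, 0 <= qform (mx_pow M k) v) /\
       (forall v, 0 <= qform (mx_pow M k.+1) v) by case=> ->.
elim: k => [|k [IHk IHk1]]; first by split=> w; rewrite ?qform1_ge0 // mx_powS mulmx1.
by split=> // w; rewrite qform_mx_powSS.
Qed.

Lemma qform_1B_ge0 M v : M^T = M -> spec_norm_le1 M -> 0 <= qform (1%:M - M) v.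
Proof.
move=> symM normM.
have norm1E w : ((w^T *m w) 0 0) = bform 1%:M w w by rewrite /bform mulmx1.
have normMv : bform (M *m M) v v <= bform 1%:M v v.
  by move: (normM v); rewrite !norm1E bform_mulmxl bform_mulmxr symM mulmx1.
have := qform1_ge0 (v - M *m v).
rewrite !qformE bformDl !bformDr !bformNl !bformNr bformBm.
rewrite bform_mulmxl bform_mulmxr (bform_mulmxl _ M) (bform_mulmxr _ M) symM.
rewrite mulmx1 mul1mx; lra.
Qed.

Lemma mx_approx_weaken X Y e e' : mx_approx X Y e -> e <= e' ->
  (forall v, 0 <= qform Y v) -> mx_approx X Y e'.
Proof.
move=> XY le_ee' psdY v; have [lo up] := XY v; have := psdY v.
by split; nra.
Qed.

Lemma mx_approx_gap X Y e v :
  mx_approx X Y e -> `|qform (Y - X) v| <= e * qform Y v.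
Proof.
by move=> /(_ v) [lo up]; rewrite qformE bformBm -!qformE ler_norml; apply/andP; split; lra.
Qed.

Lemma bform_le_qform E Q e u w : E^T = E ->
  (forall v, `|qform E v| <= e * qform Q v) ->
  `|bform E u w| <= e / 2 * (qform Q u + qform Q w).
Proof.
move=> symE gapE.
(* polarization for E and the parallelogram law for Q *)
have polar : 4 * bform E u w = qform E (u + w) - qform E (u - w).
  by rewrite !qformE !bformDl !bformDr !bformNl !bformNr (bformC w u symE); ring.
have para : e * qform Q (u + w) + e * qform Q (u - w) =
            2 * e * (qform Q u + qform Q w).
  by rewrite !qformE !bformDl !bformDr !bformNl !bformNr; ring.
move: (gapE (u + w)) (gapE (u - w)); rewrite !ler_norml => /andP[l1 u1] /andP[l2 u2].
by apply/andP; split; lra.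
Qed.

Section MonotoneDifferences.
Variables (M : 'M[R]_n) (x : 'cV[R]_n).
Hypothesis psdM : psd_mx M.

Let s k := qform (mx_pow M k) x.

Lemma diff_step k :
  s k - s k.+1 - (s k.+1 - s k.+2) = qform (mx_pow M k) (x - M *m x).
Proof.
case: psdM => symM _.
rewrite /s !qformE bformDl !bformDr bformNl !bformNr bformNl.
rewrite (bform_mulmxr _ M x x) (bform_mulmxl _ M x x) (bform_mulmxl _ M x (M *m x)).
by rewrite bform_mulmxr symM -mx_powS -!mx_powSr; ring.
Qed.

Lemma diff_nonincreasing m d : s (m + d) - s (m + d).+1 <= s m - s m.+1.
Proof.
elim: d => [|d IH]; first by rewrite addn0.
by apply: le_trans IH; rewrite addnS -subr_ge0 diff_step qform_mx_pow_ge0.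
Qed.

Lemma sum_qform_1B_pow_le r :
  \sum_(j < r) qform (1%:M - M) (mx_pow M j *m x) <= qform (1%:M - mx_pow M r) x.
Proof.
case: (psdM) => symM _.
have termE j : qform (1%:M - M) (mx_pow M j *m x) = s (j + j) - s (j + j).+1.
  rewrite /s !qformE bform_mulmxl bform_mulmxr tr_mx_pow // mulmxBr mulmxBl mulmx1.
  by rewrite -mx_powD -mx_powSr -mx_powD addSn bformBm.
have telescope : \sum_(j < r) (s j - s j.+1) = s 0 - s r.
  by elim: r => [|r IH]; rewrite ?big_ord0 ?subrr // big_ord_recr /= IH; ring.
rewrite qformE bformBm -!qformE -/(s 0) -/(s r) -telescope.
by apply: ler_sum => j _; rewrite termE diff_nonincreasing.
Qed.

End MonotoneDifferences.

Lemma qform_1B_pow_ge0 M r v : psd_mx M -> spec_norm_le1 M ->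
  0 <= qform (1%:M - mx_pow M r) v.
Proof.
move=> psdM normM; apply: le_trans (sum_qform_1B_pow_le v psdM r).
by apply: sumr_ge0 => j _; apply: qform_1B_ge0 => //; case: psdM.
Qed.

Section Telescoping.
Variables (A B Q : 'M[R]_n) (e : R).
Hypothesis symA : A^T = A.
Hypothesis gapAB : forall u w,
  `|bform (A - B) u w| <= e / 2 * (qform Q u + qform Q w).

Lemma bform_mx_pow_sub_le r x y :
  `|bform (mx_pow A r - mx_pow B r) x y| <=
  e / 2 * (\sum_(j < r) qform Q (mx_pow A j *m x) +
           \sum_(j < r) qform Q (mx_pow B j *m y)).
Proof.
elim: r x y => [|r IH] x y; first by rewrite !big_ord0 subrr bform0m normr0 addr0 mulr0.
have splitE : bform (mx_pow A r.+1 - mx_pow B r.+1) x y =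
    bform (mx_pow A r - mx_pow B r) (A *m x) y + bform (A - B) x (mx_pow B r *m y).
  have -> : mx_pow A r.+1 - mx_pow B r.+1 =
      A *m (mx_pow A r - mx_pow B r) + (A - B) *m mx_pow B r.
    by rewrite mulmxBr mulmxBl -!mx_powS addrA subrK.
  by rewrite bformDm bform_mulmxl bform_mulmxr symA.
have sumAE : \sum_(j < r.+1) qform Q (mx_pow A j *m x) =
    qform Q x + \sum_(j < r) qform Q (mx_pow A j *m (A *m x)).
  rewrite big_ord_recl mul1mx; congr (_ + _); apply: eq_bigr => j _.
  by rewrite lift0 mx_powSr mulmxA.
rewrite splitE sumAE big_ord_recr /=.
apply: le_trans (ler_normD _ _) _.
have := IH (A *m x) y; have := gapAB x (mx_pow B r *m y); lra.
Qed.

End Telescoping.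

End QuadraticForm.

Lemma ratio_bounds_of_gap (R : realFieldType) (e a b ta tb : R) :
  0 <= e -> e <= 1 / 2 -> 0 <= b -> ta <= (1 + e) * a -> tb <= b ->
  `|b - a| <= e / 2 * (ta + tb) ->
  (1 - 2 * e) * b <= a /\ a <= (1 + 2 * e) * b.
Proof.
move=> e_ge0 e_le b_ge0 ta_le tb_le; rewrite ler_norml => /andP[lo up].
have gap : `|b - a| <= e / 2 * ((1 + e) * a + b).
  rewrite ler_norml; have : e / 2 * (ta + tb) <= e / 2 * ((1 + e) * a + b).
    by apply: ler_wpM2l; lra.
  by move=> ?; apply/andP; split; lra.
move: gap; rewrite ler_norml => /andP[glo gup].
have c_gt0 : 0 < 1 - e / 2 - e ^+ 2 / 2 by nra.
have d_gt0 : 0 < 1 + e / 2 + e ^+ 2 / 2 by nra.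
split; rewrite -subr_ge0.
- rewrite -(pmulr_rge0 _ d_gt0).
  have : 0 <= e * (1 + e / 2 + e ^+ 2) * b by rewrite !mulr_ge0 //; nra.
  nra.
- rewrite -(pmulr_rge0 _ c_gt0).
  have : 0 <= e * (1 - 3 / 2 * e - e ^+ 2) * b by rewrite !mulr_ge0 //; nra.
  nra.
Qed.

Lemma mx_approx_pow (R : rcfType) (n r : nat) (A B : 'M[R]_n) (eps : R) :
  psd_mx A -> psd_mx B -> spec_norm_le1 B ->
  mx_approx (1%:M - A) (1%:M - B) eps ->
  mx_approx (1%:M - B) (1%:M - A) eps ->
  0 <= eps -> eps <= 1 / 2 ->
  mx_approx (1%:M - mx_pow A r) (1%:M - mx_pow B r) (2 * eps).
Proof.
move=> psdA psdB normB AB BA eps_ge0 eps_le x.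
have [symA _] := psdA; have [symB _] := psdB.
have gapAB u w : `|bform (A - B) u w| <= eps / 2 * (qform (1%:M - B) u + qform (1%:M - B) w).
  apply: bform_le_qform; first by rewrite linearB /= symA symB.
  by move=> v; have := mx_approx_gap v AB; rewrite opprB addrC addrA subrK.
have := bform_mx_pow_sub_le symA gapAB r x x.
have -> : bform (mx_pow A r - mx_pow B r) x x =
    qform (1%:M - mx_pow B r) x - qform (1%:M - mx_pow A r) x.
  by rewrite !qformE !bformBm; ring.
apply: ratio_bounds_of_gap => //; last exact: sum_qform_1B_pow_le.
- exact: qform_1B_pow_ge0.
- apply: le_trans (_ : (1 + eps) * \sum_(j < r) qform (1%:M - A) (mx_pow A j *m x) <= _).
    by rewrite mulr_sumr; apply: ler_sum => j _; case: (BA (mx_pow A j *m x)).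
  by apply: ler_wpM2l; [lra | exact: sum_qform_1B_pow_le].
Qed.

Theorem mainTheorem9 (R : rcfType) (n r : nat) (A B : 'M[R]_n) (eps : R) :
  (0 < r)%N ->
  psd_mx A -> psd_mx B ->
  spec_norm_le1 A -> spec_norm_le1 B ->
  mx_approx (1%:M - A) (1%:M - B) eps ->
  mx_approx (1%:M - B) (1%:M - A) eps ->
  0 <= eps -> eps <= 1 / (2 * (bitlen r)%:R) ->
  mx_approx (1%:M - mx_pow A r) (1%:M - mx_pow B r) (2 * eps * (bitlen r)%:R).
Proof.
move=> _ psdA psdB _ normB AB BA eps_ge0 eps_le.
set L := (bitlen r)%:R; have L_ge1 : 1 <= L by rewrite ler1n.
have eps_le_half : eps <= 1 / 2.
  apply: (le_trans eps_le); rewrite !div1r lef_pV2 ?posrE; lra.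
refine (mx_approx_weaken (mx_approx_pow r psdA psdB normB AB BA eps_ge0 eps_le_half) _ _).
- by rewrite -[leLHS]mulr1 ler_wpM2l ?mulr_ge0.
- by move=> v; apply: qform_1B_pow_ge0.
Qed.
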